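(* Every $3$-januarial is of simple type; that is, its common graph $\Upsilon$ is a union of pairwise disjoint simple circuits.
   Context: Let $\Delta(2,3,\ell)=\langle x,y:x^2=y^3=(xy)^\ell=1\rangle$, acting on a finite set $S$. The coset graph has: - vertex set $S$; - an undirected $x$-edge joining each pair of points transposed by $x$; - a directed $y$-edge $u\to uy$. It is $2$-cell embedded in a closed orientable surface via the rotation system (incoming $y$-edge, outgoing $y$-edge, $x$-edge) at each vertex. The faces are $y$-faces and $xy$-faces; this is the coset diagram. A $3$-januarial is the coset diagram of such an action, for some $\ell$, in which $\langle xy\rangle$ has exactly two orbits, each of size $|S|/2$. Let $S_1,S_2$ be the closures of its two $xy$-faces. Collapsing each $y$-face to a point gives the companion diagram, with images $S_i'$ of $S_i$. The common graph is $\Upsilon=S_1'\cap S_2'$. A januarial is of simple type if $\Upsilon$ consists of pairwise disjoint simple circuits. *)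

From mathcomp Require Import all_boot all_fingroup.
Set Implicit Arguments. Unset Strict Implicit. Unset Printing Implicit Defensive.
Local Open Scope group_scope.

Section Januarial.
Variables (T : finType) (x y : {perm T}).

(* The action is a right action: u.(xy) = y (x u), i.e. the permutation x * y
   in MathComp (permM : (s * t) u = t (s u)). *)

(* x-edge joining u and u x (only when x transposes them): represented by the
   unordered pair {u, u x}. *)
Definition xedge (u : T) : {set T} := [set u; x u].

(* Closure S_O of the xy-face bounded by the <xy>-orbit O.  Its boundary walk is
   u -x-> u x -y-> u x y -x-> ... for u in O, so it contains:
   - the vertices O together with O x,
   - the x-edges {u, u x} (u in O, u x <> u),
   - the y-edges v -> v y for v in O x (indexed by their tail v). *)
Definition face_vertices (O : {set T}) : {set T} := O :|: [set x u | u in O].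
Definition face_xedges (O : {set T}) : {set {set T}} :=
  [set xedge u | u in O & x u != u].
Definition face_yedges (O : {set T}) : {set T} := [set x u | u in O].

(* Companion diagram: every y-face (a <y>-orbit, of size 1 or 3, with its
   y-edges) is collapsed to a point, represented by the <y>-orbit itself.
   The x-edges survive as the edges of the companion diagram.
   Image S_O' of S_O: the points images of its vertices and y-edges, and its
   x-edges (the face interior is disjoint from the other face). *)
Definition comp_vertices (O : {set T}) : {set {set T}} :=
  [set porbit y v | v in face_vertices O] :|: [set porbit y v | v in face_yedges O].
Definition comp_edges (O : {set T}) : {set {set T}} := face_xedges O.

Definition ups_vertices (O1 O2 : {set T}) := comp_vertices O1 :&: comp_vertices O2.
Definition ups_edges (O1 O2 : {set T}) := comp_edges O1 :&: comp_edges O2.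

Definition joins (e A B : {set T}) : Prop :=
  exists u, [/\ x u != u, e = xedge u, porbit y u = A & porbit y (x u) = B].

(* A simple circuit: cyclic sequence of k >= 1 distinct vertices v_0..v_{k-1}
   and distinct edges e_0..e_{k-1}, e_i joining v_i and v_{i+1 mod k}
   (k = 1 : a loop, k = 2 : two parallel edges). *)
Definition simple_circuit (vs es : seq {set T}) : Prop :=
  [/\ size es = size vs, (0 < size vs)%N, uniq vs, uniq es &
      forall i, (i < size vs)%N ->
        joins (nth set0 es i) (nth set0 vs i) (nth set0 vs ((i.+1 %% size vs)%N))].

Definition disjoint_simple_circuits (V E : {set {set T}}) : Prop :=
  exists cs : seq (seq {set T} * seq {set T}),
    [/\ forall c, c \in cs -> simple_circuit c.1 c.2,
        forall c, c \in cs -> {subset c.1 <= V} /\ {subset c.2 <= E},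
        forall v, v \in V -> #|[set i : 'I_(size cs) | v \in (nth ([::], [::]) cs i).1]| = 1%N
      & forall e, e \in E -> #|[set i : 'I_(size cs) | e \in (nth ([::], [::]) cs i).2]| = 1%N].

Definition triangle_action (l : nat) : Prop :=
  [/\ (0 < l)%N, x * x = 1, y ^+ 3 = 1 & (x * y) ^+ l = 1].

Definition januarial3 : Prop :=
  #|porbits (x * y)| = 2 /\
  forall O, O \in porbits (x * y) -> (2 * #|O|)%N = #|T|.

Definition simple_type : Prop :=
  forall O1 O2, O1 \in porbits (x * y) -> O2 \in porbits (x * y) -> O1 != O2 ->
    disjoint_simple_circuits (ups_vertices O1 O2) (ups_edges O1 O2).

End Januarial.

(* Let O be one xy-face and call d a crossing when d lies in O but d y does
   not.  Since xy preserves O, the points u x and u y always lie in the same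
   face.  A vertex of the common graph is a y-orbit meeting both faces, and as
   y has order 3 such an orbit contains exactly one crossing; an edge is an
   x-edge {u, u x} with u in O and u x outside O, i.e. with u a crossing.  So
   the crossings index both the vertices (d |-> d<y>) and the edges
   (d |-> {d, d x}), and the edge of d joins d<y> to (d x)<y>, whose unique
   crossing we call next(d).  The map next is injective, hence a permutation
   of the crossings, and its cycles are pairwise disjoint simple circuits
   covering the common graph. *)

From mathcomp Require Import all_boot all_fingroup.
Set Implicit Arguments. Unset Strict Implicit. Unset Printing Implicit Defensive.

Local Open Scope group_scope.

Lemma card_nth_pred (A : eqType) (s : seq A) (P : pred A) x0 :
  #|[set i : 'I_(size s) | P (nth x0 s i)]| = count P s.
Proof.
rewrite cardsE cardE /enum_mem size_filter -enumT.
by rewrite -[in RHS](mkseq_nth x0 s) /mkseq -val_enum_ord -map_comp count_map.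
Qed.

Lemma nth_orbitS (T : finType) (f : T -> T) (u : T) i : injective f ->
  (i < fingraph.order f u)%N ->
  nth u (fingraph.orbit f u) (i.+1 %% fingraph.order f u) = f (nth u (fingraph.orbit f u) i).
Proof.
move=> f_inj lt_i; rewrite !nth_traject ?ltn_mod ?fingraph.order_gt0 //.
move: lt_i; rewrite leq_eqVlt => /orP [/eqP ord_u|lt_i1]; last by rewrite modn_small.
by rewrite ord_u modnn /= -iterS ord_u (iter_order f_inj).
Qed.

Lemma porbit_permS (T : finType) (s : {perm T}) t : porbit s (s t) = porbit s t.
Proof. by have := porbit_perm s 1 t; rewrite expg1. Qed.

Lemma mem_porbitS (T : finType) (s : {perm T}) t : s t \in porbit s t.
Proof. by have := mem_porbit s 1 t; rewrite expg1. Qed.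

Lemma mem_porbitSS (T : finType) (s : {perm T}) t : s (s t) \in porbit s t.
Proof. by have := mem_porbit s 2 t; rewrite expgS expg1 permM. Qed.

Lemma xedge_involC (T : finType) (x : {perm T}) u :
  involutive x -> xedge x (x u) = xedge x u.
Proof. by move=> xK; apply/setP => z; rewrite !inE xK orbC. Qed.

Section PermOrder3.
Variables (T : finType) (y : {perm T}).
Hypothesis y3 : y ^+ 3 = 1.

Lemma perm_order3K t : y (y (y t)) = t.
Proof. by rewrite -!permM -[RHS]perm1 -y3 !expgS expg0 mulg1 mulgA. Qed.

Lemma porbit_order3P t w : w \in porbit y t -> [\/ w = t, w = y t | w = y (y t)].
Proof.
case/porbitP => i ->; rewrite -(expg_mod i y3).
have : (i %% 3 < 3)%N by rewrite ltn_mod.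
case: (i %% 3)%N => [|[|[|//]]] _.
- by constructor 1; rewrite expg0 perm1.
- by constructor 2; rewrite expg1.
- by constructor 3; rewrite expgS expg1 permM.
Qed.

End PermOrder3.

Lemma comp_verticesE (T : finType) (x y : {perm T}) (A : {set T}) :
  (forall t, (y (x t) \in A) = (t \in A)) -> comp_vertices x y A = porbit y @: A.
Proof.
move=> A_xy; apply/setP => V; apply/idP/imsetP => [|[w wA ->]]; last first.
  by rewrite !inE; apply/orP; left; apply: imset_f; rewrite inE wA.
have face_orbit s : s \in face_vertices x A -> exists2 w, w \in A & porbit y s = porbit y w.
  case/setUP => [sA|/imsetP [u uA ->]]; first by exists s.
  by exists (y (x u)); rewrite ?A_xy ?porbit_permS.
case/setUP => /imsetP [s sF ->]; first exact: face_orbit.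
by apply: face_orbit; rewrite inE sF orbT.
Qed.

Section CommonGraph.
Variables (T : finType) (x y : {perm T}) (O : {set T}).
Hypotheses (xK : involutive x) (y3 : y ^+ 3 = 1)
  (O_xy : forall t, (y (x t) \in O) = (t \in O)).

Lemma mem_x_y t : (x t \in O) = (y t \in O).
Proof. by rewrite -{2}(xK t) O_xy. Qed.

Definition crossing u := (u \in O) && (y u \notin O).

Lemma crossing_porbit_uniq w w' :
  crossing w -> crossing w' -> w' \in porbit y w -> w' = w.
Proof.
case/andP => wO ywO /andP [w'O yw'O] /(porbit_order3P y3) [//|e|e].
- by move: ywO; rewrite -e w'O.
- by move: yw'O; rewrite e (perm_order3K y3) wO.
Qed.

Lemma porbit_crossing w w' : w \in O -> w' \notin O -> w' \in porbit y w ->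
  exists2 d, crossing d & porbit y d = porbit y w.
Proof.
move=> wO w'O /(porbit_order3P y3) [e|e|e]; first by rewrite e wO in w'O.
  by exists w; rewrite // /crossing wO -e.
have [ywO|ywO] := boolP (y w \in O); last by exists w; rewrite // /crossing wO.
by exists (y w); rewrite ?porbit_permS // /crossing ywO -e.
Qed.

Lemma ups_verticesE : ups_vertices x y O (~: O) = porbit y @: [set d | crossing d].
Proof.
have Oc_xy t : (y (x t) \in ~: O) = (t \in ~: O) by rewrite !inE O_xy.
rewrite /ups_vertices !comp_verticesE //; apply/setP => V.
apply/setIP/imsetP => [[/imsetP [w wO ->] /imsetP [w' w'O e]]|[d]].
  have w'w : w' \in porbit y w by rewrite -eq_porbit_mem e.
  rewrite inE in w'O; have [d dX <-] := porbit_crossing wO w'O w'w.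
  by exists d; rewrite ?inE.
rewrite inE => /andP [dO ydO] ->; split; apply/imsetP; first by exists d.
by exists (y d); rewrite ?inE ?porbit_permS.
Qed.

Lemma crossing_x_neq d : crossing d -> x d != d.
Proof. by case/andP => dO ydO; apply: contraNneq ydO => e; rewrite -mem_x_y e. Qed.

Lemma ups_edgesE : ups_edges x O (~: O) = xedge x @: [set d | crossing d].
Proof.
apply/setP => e; apply/setIP/imsetP => [[]|[d]].
  case/imsetP => u /[!inE] /andP [uO _] -> /imsetP [u' /[!inE] /andP [u'O _] e'].
  have : u' \in xedge x u by rewrite e' !inE eqxx.
  rewrite !inE => /orP [/eqP eu'|/eqP eu']; first by rewrite eu' uO in u'O.
  by exists u; rewrite // inE /crossing uO -mem_x_y -eu'.
rewrite inE => dX ->; have xd_neq := crossing_x_neq dX; case/andP: dX => dO ydO.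
split; apply/imsetP; first by exists d; rewrite // inE dO.
by exists (x d); rewrite ?xedge_involC // !inE mem_x_y ydO xK eq_sym.
Qed.

Lemma xedge_crossing_inj a b : crossing a -> crossing b -> xedge x a = xedge x b -> a = b.
Proof.
move=> /andP [aO yaO] /andP [bO _] e.
have : b \in xedge x a by rewrite e !inE eqxx.
rewrite !inE => /orP [/eqP //|/eqP eb].
by move: yaO; rewrite -mem_x_y -eb bO.
Qed.

(* [next_crossing d] is the unique crossing in the y-orbit of [x d]; off the
   crossings it is the identity, so that it is injective on all of [T]. *)
Definition next_crossing u :=
  if crossing u then if crossing (y (x u)) then y (x u) else y (y (x u)) else u.

Local Notation f := next_crossing.

Lemma next_crossingP d : crossing d -> crossing (f d).
Proof.
rewrite /f => dX; rewrite dX; case: ifP => // /negbT.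
case/andP: dX => dO ydO; rewrite /crossing O_xy dO negbK => yyxdO.
by rewrite yyxdO (perm_order3K y3) mem_x_y.
Qed.

Lemma next_crossing_porbit d : crossing d -> f d \in porbit y (x d).
Proof. by rewrite /f => ->; case: ifP => _; rewrite ?mem_porbitS ?mem_porbitSS. Qed.

Lemma next_crossing_inj : injective f.
Proof.
have inj_crossing d d' : crossing d -> crossing d' -> f d = f d' -> d = d'.
  move=> dX d'X e; have : x d' \in porbit y (x d).
    have := next_crossing_porbit dX; rewrite -eq_porbit_mem => /eqP <-.
    by rewrite e porbit_sym next_crossing_porbit.
  case/andP: dX => dO ydO; case/andP: d'X => d'O yd'O.
  case/(porbit_order3P y3) => e'.
  - by rewrite -(xK d) -e' xK.
  - by move: yd'O; rewrite -mem_x_y e' O_xy dO.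
  - by move: ydO; rewrite -mem_x_y -[x d](perm_order3K y3) -e' O_xy d'O.
move=> d d'; have [dX|dX] := boolP (crossing d); have [d'X|d'X] := boolP (crossing d').
- exact: inj_crossing.
- by move=> e; move: (next_crossingP dX); rewrite e /f (negPf d'X) (negPf d'X).
- by move=> e; move: (next_crossingP d'X); rewrite -e /f (negPf dX) (negPf dX).
- by rewrite /f (negPf dX) (negPf d'X).
Qed.

Local Notation orbit := (fingraph.orbit f).

Lemma crossing_orbit u v : crossing u -> v \in orbit u -> crossing v.
Proof.
move=> uX; rewrite -fconnect_orbit => /connectP [p]; elim: p u uX => [|w p IHp] u uX /=.
  by move=> _ ->.
by case/andP => /eqP <-; apply: IHp; apply: next_crossingP.
Qed.

Definition circuit u := (map (porbit y) (orbit u), map (xedge x) (orbit u)).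

Lemma circuit_simple u : crossing u -> simple_circuit x y (circuit u).1 (circuit u).2.
Proof.
move=> uX; have orbX := crossing_orbit uX; split => /=.
- by rewrite !size_map.
- by rewrite size_map size_orbit fingraph.order_gt0.
- rewrite map_inj_in_uniq ?orbit_uniq // => a b aO bO e.
  by apply: crossing_porbit_uniq (orbX _ bO) (orbX _ aO) _; rewrite -e porbit_id.
- rewrite map_inj_in_uniq ?orbit_uniq // => a b aO bO.
  exact: xedge_crossing_inj (orbX _ aO) (orbX _ bO).
rewrite size_map size_orbit => i lt_i.
have lt_i1 : (i.+1 %% fingraph.order f u < fingraph.order f u)%N.
  by rewrite ltn_mod fingraph.order_gt0.
rewrite !(nth_map u) ?size_orbit //; rewrite (nth_orbitS next_crossing_inj lt_i).
set a := nth u (orbit u) i.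
have aX : crossing a by apply: orbX; rewrite mem_nth ?size_orbit.
exists a; split; rewrite ?crossing_x_neq //.
by apply/eqP; rewrite eq_porbit_mem porbit_sym next_crossing_porbit.
Qed.

Lemma mem_circuit_vertex r d : crossing r -> crossing d ->
  (porbit y d \in (circuit r).1) = (d \in orbit r).
Proof.
move=> rX dX; apply/mapP/idP => [[a ar e]|]; last by exists d.
by rewrite (@crossing_porbit_uniq a d) // ?(crossing_orbit rX) // -e porbit_id.
Qed.

Lemma mem_circuit_edge r d : crossing r -> crossing d ->
  (xedge x d \in (circuit r).2) = (d \in orbit r).
Proof.
move=> rX dX; apply/mapP/idP => [[a ar e]|]; last by exists d.
by rewrite (@xedge_crossing_inj d a) // (crossing_orbit rX).
Qed.

Definition crossing_roots := [seq r <- enum T | crossing r && froots f r].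

Lemma mem_crossing_roots r : (r \in crossing_roots) = crossing r && froots f r.
Proof. by rewrite mem_filter mem_enum andbT. Qed.

Lemma crossing_roots_uniq : uniq crossing_roots.
Proof. by rewrite filter_uniq ?enum_uniq. Qed.

Lemma card_circuits_with (P : pred (seq {set T} * seq {set T})) d : crossing d ->
    {in crossing_roots, forall r, P (circuit r) = (d \in orbit r)} ->
  #|[set i : 'I_(size (map circuit crossing_roots))
       | P (nth ([::], [::]) (map circuit crossing_roots) i)]| = 1%N.
Proof.
move=> dX P_orbit; have f_sym := fconnect_sym next_crossing_inj.
rewrite card_nth_pred count_map (eq_in_count (a2 := pred1 (froot f d))).
  rewrite (count_uniq_mem _ crossing_roots_uniq) mem_crossing_roots.
  rewrite (roots_root f_sym) andbT (crossing_orbit dX) //.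
  by rewrite -fconnect_orbit connect_root.
move=> r r_root /=; rewrite P_orbit // -fconnect_orbit -(root_connect f_sym).
by move: r_root; rewrite mem_crossing_roots => /andP [_ /eqP ->].
Qed.

Lemma common_graph_circuits :
  disjoint_simple_circuits x y (ups_vertices x y O (~: O)) (ups_edges x O (~: O)).
Proof.
have rootsX r : r \in crossing_roots -> crossing r.
  by rewrite mem_crossing_roots => /andP [].
exists (map circuit crossing_roots); split.
- by move=> c /mapP [r /rootsX rX ->]; apply: circuit_simple.
- move=> c /mapP [r /rootsX rX ->]; rewrite ups_verticesE ups_edgesE.
  by split=> _ /mapP [a ar ->]; apply: imset_f; rewrite inE (crossing_orbit rX).
- rewrite ups_verticesE => _ /imsetP [d /[!inE] dX ->].
  apply: (card_circuits_with (P := fun c => porbit y d \in c.1) dX) => r /rootsX rX.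
  exact: mem_circuit_vertex.
- rewrite ups_edgesE => _ /imsetP [d /[!inE] dX ->].
  apply: (card_circuits_with (P := fun c => xedge x d \in c.2) dX) => r /rootsX rX.
  exact: mem_circuit_edge.
Qed.

End CommonGraph.

Lemma mem_porbits (T : finType) (p : {perm T}) (A : {set T}) t :
  A \in porbits p -> (t \in A) = (porbit p t == A).
Proof. by case/imsetP => a _ ->; rewrite eq_porbit_mem. Qed.

Lemma porbits_perm_stable (T : finType) (p : {perm T}) (A : {set T}) t :
  A \in porbits p -> (p t \in A) = (t \in A).
Proof. by move=> pA; rewrite !(mem_porbits _ pA) porbit_permS. Qed.

Lemma porbits_two_compl (T : finType) (p : {perm T}) (A B : {set T}) :
  #|porbits p| = 2 -> A \in porbits p -> B \in porbits p -> A != B -> B = ~: A.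
Proof.
move=> card2 pA pB AB; have porbitsE : porbits p = [set A; B].
  apply/esym/eqP; rewrite eqEcard cards2 AB card2 andbT.
  by apply/subsetP => C /set2P [] ->.
apply/setP => t; rewrite inE (mem_porbits _ pA) (mem_porbits _ pB).
have : porbit p t \in porbits p by apply: imset_f.
by rewrite porbitsE => /set2P [] ->; rewrite eqxx ?(eq_sym B) (negPf AB).
Qed.

Theorem theorem1 (T : finType) (x y : {perm T}) (l : nat) :
  triangle_action x y l -> januarial3 x y -> simple_type x y.
Proof.
move=> [_ xx1 y3 _] [two_orbits _] O1 O2 O1_orbit O2_orbit O12.
have xK : involutive x by move=> t; rewrite -permM xx1 perm1.
have O1_xy t : (y (x t) \in O1) = (t \in O1) by rewrite -permM porbits_perm_stable.
rewrite (porbits_two_compl two_orbits O1_orbit O2_orbit O12).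
exact: common_graph_circuits xK y3 O1_xy.
Qed.
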